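(* Let $s>2$ be an integer, $A_s=\{0,1,\dots,s-1\}$, and let $A_0,A_1$ be disjoint subsets of $A_s$ with $A_0\cup A_1=A_s$, $A_0\neq A_s\neq A_1$. Let $f:[0,1]\to[0,1]$ be defined by $$f\big(\Delta^{s*}_{\alpha_1\alpha_2\dots\alpha_n\dots}\big)=\Delta^{2*}_{\beta_1\beta_2\dots\beta_n\dots},$$ where $\beta_1=0$ if $\alpha_1\in A_0$, $\beta_1=1$ if $\alpha_1\in A_1$, and for $n\ge 1$, $\beta_{n+1}=\beta_n$ if $\alpha_{n+1}=\alpha_n$ and $\beta_{n+1}=1-\beta_n$ if $\alpha_{n+1}\neq\alpha_n$. Then: (i) the range of $f$ is $f([0,1])=[0,1]$; (ii) the image under $f$ of every $s*$-cylinder $\Delta^{s*}_{c_1\dots c_m}$ is a $2*$-cylinder; (iii) $f$ has finite level sets and level sets of the cardinality of the continuum, i.e. there exists $y\in[0,1]$ with $f^{-1}(y)$ nonempty and finite, and there exists $y\in[0,1]$ with $f^{-1}(y)$ of cardinality of the continuum.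
   Context: $L_s=A_s\times A_s\times\cdots$ denotes the space of sequences $(\alpha_n)$ with $\alpha_n\in A_s$. The $s*$-representation is an encoding of $[0,1]$ topologically equivalent to the classical $s$-adic one: there is a continuous strictly monotone surjection $h_s:[0,1]\to[0,1]$ such that $\Delta^{s*}_{\alpha_1\alpha_2\dots}=h_s\big(\sum_{n\ge1}\alpha_n s^{-n}\big)$ for every $(\alpha_n)\in L_s$; a sequence $(\alpha_n)$ with $x=\Delta^{s*}_{\alpha_1\alpha_2\dots}$ is called an $s*$-code of $x$. Likewise the $2*$-representation is given by a continuous strictly monotone surjection $h_2:[0,1]\to[0,1]$ via $\Delta^{2*}_{\beta_1\beta_2\dots}=h_2\big(\sum_{n\ge1}\beta_n 2^{-n}\big)$, $\beta_n\in\{0,1\}$. An $s*$-cylinder of rank $m$ with base $c_1\dots c_m$ is $\Delta^{s*}_{c_1\dots c_m}=\{\Delta^{s*}_{c_1\dots c_m\alpha_1\alpha_2\dots}:(\alpha_n)\in L_s\}$; $2*$-cylinders $\Delta^{2*}_{\beta_1\dots\beta_m}$ are defined analogously. The value of $f(x)$ given by the formula does not depend on which $s*$-code of $x$ is used, so $f$ is a well-defined function on $[0,1]$. *)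

From mathcomp Require Import all_boot all_order all_algebra.
From mathcomp Require Import all_classical all_reals all_analysis.
Set Implicit Arguments. Unset Strict Implicit. Unset Printing Implicit Defensive.
Import Order.TTheory GRing.Theory Num.Theory numFieldNormedType.Exports.
Local Open Scope ring_scope.
Local Open Scope classical_set_scope.

(* Digit sequences are indexed from 0: a n stands for alpha_{n+1}. *)
Definition digits (s : nat) (a : nat -> nat) : Prop := forall n, (a n < s)%N.

Definition sadic {R : realType} (s : nat) (a : nat -> nat) : R :=
  limn (series (fun n => (a n)%:R / (s%:R ^+ n.+1) : R)).

Definition prepend (c : seq nat) (a : nat -> nat) : nat -> nat :=
  fun n => if (n < size c)%N then nth 0%N c n else a (n - size c)%N.

Definition star_cyl {R : realType} (h : R -> R) (s : nat) (c : seq nat) : set R :=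
  [set x | exists a, digits s a /\ x = h (sadic s (prepend c a))].

(* beta n stands for beta_{n+1}; A1 is the set of digits mapped to 1 *)
Fixpoint beta (A1 : set nat) (a : nat -> nat) (n : nat) : nat :=
  match n with
  | 0 => if `[< A1 (a 0%N) >] then 1%N else 0%N
  | n'.+1 => if a n'.+1 == a n' then beta A1 a n' else (1 - beta A1 a n')%N
  end.

Definition rep_map {R : realType} (h : R -> R) : Prop :=
  {within `[0, 1]%classic, continuous h} /\
  ({in `[0, 1]%classic &, {mono h : x y / x < y}} \/
   {in `[0, 1]%classic &, {mono h : x y /~ x < y}}) /\
  h @` `[0, 1]%classic = `[0, 1]%classic.

From mathcomp Require Import all_boot all_order all_algebra.
From mathcomp Require Import all_classical all_reals all_analysis.
From mathcomp Require Import ring zify.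
Import Order.TTheory GRing.Theory Num.Theory numFieldNormedType.Exports.
Local Open Scope ring_scope.
Local Open Scope classical_set_scope.

Set Implicit Arguments. Unset Strict Implicit. Unset Printing Implicit Defensive.

(* beta_{n+1} is the parity of the number of digit changes in alpha_1 ... alpha_{n+1},
   started at [alpha_1 \in A1].  Past a prefix c any bit continuation is realized by
   repeating the digit to keep the bit and changing it to flip the bit, so f maps the
   s*-cylinder of c onto the 2*-cylinder of the bits of c; the empty prefix gives (i).
   The bits 000... come only from constant digit sequences, so the level set of
   Delta^{2*}_{000...} is finite.  As s > 2, there are two digits p < q other than a
   digit k0 outside A1; putting k0 at even places and p or q at odd places always gives
   the bits 0101..., and these continuum many choices have distinct s-adic values. *)

Section SAdic.
Variables (R : realType) (s : nat).
Hypothesis s_gt1 : (1 < s)%N.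

Definition sadic_psum (a : nat -> nat) : nat -> R :=
  series (fun n => (a n)%:R / s%:R ^+ n.+1).

Lemma sadic_psum0 a : sadic_psum a 0 = 0.
Proof. by rewrite /sadic_psum /series /= big_geq. Qed.

Lemma sadic_psumS a n :
  sadic_psum a n.+1 = sadic_psum a n + (a n)%:R / s%:R ^+ n.+1.
Proof. exact: seriesSr. Qed.

Lemma eq_sadic_psum a b n : (forall i, (i < n)%N -> a i = b i) ->
  sadic_psum a n = sadic_psum b n.
Proof. by move=> ab; apply: eq_big_nat => i /andP[_ /ab ->]. Qed.

Lemma expr_s_gt0 n : 0 < s%:R ^+ n :> R.
Proof. by rewrite exprn_gt0 // ltr0n ltnW. Qed.

Lemma sadic_psum_nd a : nondecreasing_seq (sadic_psum a).
Proof.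
apply/nondecreasing_seqP => n; rewrite sadic_psumS lerDl.
by rewrite divr_ge0 // ltW // expr_s_gt0.
Qed.

Lemma sadic_psum_ge0 a n : 0 <= sadic_psum a n.
Proof. by rewrite -(sadic_psum0 a); apply: sadic_psum_nd. Qed.

(* The digit bound a n < s is what makes these upper bounds nonincreasing in n. *)
Lemma sadic_psum_tail a n m : digits s a -> (n <= m)%N ->
  sadic_psum a m + (s%:R ^+ m)^-1 <= sadic_psum a n + (s%:R ^+ n)^-1.
Proof.
move=> da /subnK <-; elim: (m - n)%N => [|k IH] //=.
apply: le_trans IH; rewrite addSn sadic_psumS -addrA lerD2l.
have -> : (s%:R ^+ (k + n))^-1 = s%:R / s%:R ^+ (k + n).+1 :> R.
  by rewrite exprS invfM mulrA mulfV ?mul1r // pnatr_eq0 -lt0n ltnW.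
by rewrite -[X in _ + X]mul1r -mulrDl natr1 ler_wpM2r ?ler_nat ?da //.
Qed.

Lemma is_cvg_sadic_psum a : digits s a -> cvgn (sadic_psum a).
Proof.
move=> da; apply: nondecreasing_is_cvgn; first exact: sadic_psum_nd.
exists 1 => _ [m _ <-]; have := sadic_psum_tail da (leq0n m).
rewrite sadic_psum0 expr0 invr1 add0r; apply: le_trans.
by rewrite lerDl invr_ge0 ltW // expr_s_gt0.
Qed.

Lemma sadic_psum_bounds a n : digits s a ->
  sadic_psum a n <= sadic s a <= sadic_psum a n + (s%:R ^+ n)^-1.
Proof.
move=> da; apply/andP; split.
  exact: nondecreasing_cvgn_le (sadic_psum_nd a) (is_cvg_sadic_psum da) n.
apply: limr_le; first exact: is_cvg_sadic_psum.
near=> m; have /(sadic_psum_tail da) : (n <= m)%N by near: m; exact: nbhs_infty_ge.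
by apply: le_trans; rewrite lerDl invr_ge0 ltW // expr_s_gt0.
Unshelve. all: by end_near. Qed.

Lemma sadic_itv a : digits s a -> 0 <= (sadic s a : R) <= 1.
Proof.
by move=> da; have := sadic_psum_bounds 0 da; rewrite sadic_psum0 expr0 invr1 add0r.
Qed.

Lemma sadic_eq_of_bounds a u :
  (forall n, sadic_psum a n <= u <= sadic_psum a n + (s%:R ^+ n)^-1) ->
  sadic s a = u.
Proof.
move=> bounds; apply: cvg_lim => //.
apply: (@squeeze_cvgr _ _ _ _ (fun n => u - (s%:R ^+ n)^-1) (fun=> u)).
- near=> n; have /andP[lo hi] := bounds n.
  by rewrite lo lerBlDr andbT.
- rewrite -[X in _ --> X]subr0; apply: cvgB; first exact: cvg_cst.
  under eq_fun do rewrite -exprVn.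
  apply: cvg_expr; rewrite ger0_norm ?invr_ge0 ?ler0n //.
  by rewrite invf_lt1 ?ltr0n ?ltr1n // ltnW.
- exact: cvg_cst.
Unshelve. all: by end_near. Qed.

Lemma sadic0 : sadic s (fun=> 0%N) = 0 :> R.
Proof.
apply: sadic_eq_of_bounds => n.
have -> : sadic_psum (fun=> 0%N) n = 0.
  by elim: n => [|n IH]; rewrite ?sadic_psum0 // sadic_psumS IH mul0r addr0.
by rewrite lexx add0r invr_ge0 ltW // expr_s_gt0.
Qed.

Lemma sadic_max : sadic s (fun=> s.-1) = 1 :> R.
Proof.
apply: sadic_eq_of_bounds => n.
have -> : sadic_psum (fun=> s.-1) n = 1 - (s%:R ^+ n)^-1.
  elim: n => [|n IH]; first by rewrite sadic_psum0 expr0 invr1 subrr.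
  have sE : s%:R = s.-1%:R + 1 :> R by rewrite natr1 prednK // ltnW.
  have := expr_s_gt0 n; rewrite sadic_psumS IH exprS sE => /gt_eqF sn0.
  by field; rewrite sn0 -sE pnatr_eq0 -lt0n ltnW.
by rewrite subrK lexx andbT lerBlDr lerDl invr_ge0 ltW // expr_s_gt0.
Qed.

(* For u < 1, the digits of u are read off the integer parts floor(s^n u). *)
Lemma sadic_surj (u : R) : 0 <= u <= 1 -> exists2 a, digits s a & sadic s a = u.
Proof.
move=> /andP[u_ge0]; rewrite le_eqVlt => /orP[/eqP ->|u_lt1].
  exists (fun=> s.-1); last exact: sadic_max.
  by move=> n; rewrite prednK // ltnW.
pose F n := Num.truncn (s%:R ^+ n * u).
have su_ge0 n : 0 <= s%:R ^+ n * u by rewrite mulr_ge0 // ltW // expr_s_gt0.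
have F_itv n : (F n)%:R <= s%:R ^+ n * u < (F n).+1%:R by exact: truncn_itv.
have F_ge n : (s * F n <= F n.+1)%N.
  rewrite /F truncn_ge_nat // natrM exprS -mulrA ler_wpM2l ?ler0n //.
  by case/andP: (F_itv n).
have F_lt n : (F n.+1 < s * F n + s)%N.
  rewrite /F truncn_lt_nat // -mulnSr natrM exprS -mulrA ltr_pM2l ?ltr0n.
    by case/andP: (F_itv n).
  exact: ltnW.
pose a n := (F n.+1 - s * F n)%N.
have psumE n : sadic_psum a n = (F n)%:R / s%:R ^+ n.
  elim: n => [|n IH].
    rewrite sadic_psum0 expr0 divr1 /F expr0 mul1r.
    suff -> : Num.truncn u = 0%N by [].
    by apply/eqP; rewrite truncn_eq // u_ge0.
  have := expr_s_gt0 n; rewrite sadic_psumS IH /a natrB // natrM exprS => /gt_eqF sn0.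
  by field; rewrite sn0 pnatr_eq0 -lt0n ltnW.
exists a; first by move=> n; rewrite /a ltn_subLR // addnC.
apply: sadic_eq_of_bounds => n; have /andP[lo hi] := F_itv n; have sn := expr_s_gt0 n.
rewrite psumE ler_pdivrMr // mulrC lo /= -[X in _ + X]mul1r -mulrDl natr1.
by rewrite ler_pdivlMr // mulrC ltW.
Qed.

Lemma sadic_eq0 a : digits s a -> sadic s a = 0 :> R -> forall n, a n = 0%N.
Proof.
move=> da a0 n; have /andP[+ _] := sadic_psum_bounds n.+1 da.
rewrite a0 sadic_psumS -lerBrDl sub0r => an_le.
have : (a n)%:R / s%:R ^+ n.+1 <= 0 :> R.
  by apply: le_trans an_le _; rewrite oppr_le0 sadic_psum_ge0.
by rewrite pmulr_lle0 ?invr_gt0 ?expr_s_gt0 // lern0 => /eqP.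
Qed.

(* The gap of more than one unit in the blocks at m, m+1 absorbs the tails. *)
Lemma sadic_lt a b m : digits s a -> digits s b ->
  (forall i, (i < m)%N -> a i = b i) ->
  ((a m * s + a m.+1).+1 < b m * s + b m.+1)%N -> sadic s a < sadic s b :> R.
Proof.
move=> da db ab block_lt.
have /andP[_ a_le] := sadic_psum_bounds m.+2 da.
have /andP[b_ge _] := sadic_psum_bounds m.+2 db.
apply: le_lt_trans a_le _; apply: lt_le_trans b_ge.
rewrite !sadic_psumS (eq_sadic_psum ab) -!addrA ltrD2l.
have block (x y : R) :
    (x / s%:R ^+ m.+1 + y / s%:R ^+ m.+2) * s%:R ^+ m.+2 = x * s%:R + y.
  have := expr_s_gt0 m => /gt_eqF sm0; rewrite !exprS.
  by field; rewrite sm0 pnatr_eq0 -lt0n ltnW.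
rewrite -[X in _ + (_ + X) < _]mul1r -mulrDl -(ltr_pM2r (expr_s_gt0 m.+2)).
by rewrite !block addrA; rewrite -(ltr_nat R) -addn1 !natrD !natrM in block_lt.
Qed.

End SAdic.

(* A real is coded by the set of (enumerated) rationals below it. *)
Lemma exists_inj_bits (R : realType) : exists phi : R -> nat -> bool, injective phi.
Proof.
pose code (x : R) n := if @unpickle rat n is Some q then ratr q < x else false.
have code_le x y : code x = code y -> x <= y.
  move=> e; rewrite leNgt; apply/negP => /rat_in_itvoo[q].
  rewrite in_itv /= => /andP[yq qx].
  by have := congr1 (fun g => g (pickle q)) e; rewrite /code pickleK qx ltNge (ltW yq).
by exists code => x y e; apply/eqP; rewrite eq_le !code_le.
Qed.

Lemma prepend_nil a : prepend [::] a = a.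
Proof. by apply/funext => n; rewrite /prepend subn0. Qed.

Section RepMap.
Variables (R : realType) (h : R -> R).
Hypothesis rh : rep_map h.

Lemma rep_map_in01 x : 0 <= x <= 1 -> h x \in `[0, 1]%classic.
Proof.
have [_ [_ <-]] := rh; move=> x01.
by rewrite in_setE; exists x; rewrite //= in_itv.
Qed.

Lemma rep_map_surj y : 0 <= y <= 1 -> exists2 x, 0 <= x <= 1 & h x = y.
Proof.
have [_ [_ img]] := rh; move=> y01.
have : (h @` `[0, 1]%classic) y by rewrite img /= in_itv.
by case=> x /= x01 hxy; exists x; rewrite // -in_itv.
Qed.

Lemma rep_map_inj x y : 0 <= x <= 1 -> 0 <= y <= 1 -> h x = h y -> x = y.
Proof.
move=> x01 y01; have [_ [mono _]] := rh.
have [xI yI] : x \in `[0, 1]%classic /\ y \in `[0, 1]%classic.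
  by rewrite !in_setE /= !in_itv.
case: mono => mono; [apply: inc_inj_in xI yI | apply: dec_inj_in xI yI].
- by apply: le_mono_in => u v uI vI; rewrite mono.
- by apply: le_nmono_in => u v uI vI; rewrite mono.
Qed.

Lemma star_cyl_nil s : (1 < s)%N -> star_cyl h s [::] = `[0, 1]%classic.
Proof.
move=> s_gt1; apply/seteqP; split => [_ [a [da ->]]|y].
  by rewrite prepend_nil; apply/set_mem/rep_map_in01/sadic_itv.
rewrite /= in_itv /= => /rep_map_surj[x /(sadic_surj s_gt1)[a da <-] <-].
by exists a; rewrite prepend_nil.
Qed.

Lemma rep_map_sadic_surj s x : (1 < s)%N -> x \in `[0, 1]%classic ->
  exists2 a, digits s a & x = h (sadic s a).
Proof.
move=> s_gt1; rewrite in_setE -(star_cyl_nil s_gt1) => -[a [da ->]].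
by exists a; rewrite ?prepend_nil.
Qed.

End RepMap.

Lemma prepend_digits s c a : all (fun d => (d < s)%N) c -> digits s a ->
  digits s (prepend c a).
Proof. by move=> /all_nthP cs da n; rewrite /prepend; case: ifP => [/cs|_]. Qed.

Lemma succ_mod_neq s x : (1 < s)%N -> (x < s)%N -> (x.+1 %% s)%N != x.
Proof.
move=> s_gt1; rewrite leq_eqVlt => /orP[/eqP xs|x_lt].
  by rewrite xs modnn eq_sym -lt0n -ltnS xs.
by rewrite modn_small // eqn_leq ltnn.
Qed.

Section Beta.
Variable A1 : set nat.
Implicit Types (a : nat -> nat) (c : seq nat).

Lemma beta_le1 a n : (beta A1 a n <= 1)%N.
Proof.
by elim: n => [|n IH] /=; [case: asboolP | case: ifP => // _; rewrite leq_subr].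
Qed.

Lemma eq_beta a b n : (forall i, (i <= n)%N -> a i = b i) ->
  beta A1 a n = beta A1 b n.
Proof.
elim: n => [|n IH] ab /=; first by rewrite ab.
by rewrite !ab // IH // => i /leqW /ab.
Qed.

Lemma beta_eq0_const a : (forall n, beta A1 a n = 0%N) -> forall n, a n = a 0%N.
Proof.
move=> b0; elim=> [//|n IH]; have := b0 n.+1; rewrite /= b0.
by case: eqP => [->|].
Qed.

Lemma beta_digits a : digits 2 (beta A1 a).
Proof. by move=> n; rewrite ltnS beta_le1. Qed.

Definition beta_word c := mkseq (beta A1 (prepend c (fun=> 0%N))) (size c).

Lemma beta_word_bits c : all (fun d => (d < 2)%N) (beta_word c).
Proof. by apply/allP => _ /mapP[i _ ->]; exact: beta_digits. Qed.

Lemma beta_prepend c a : beta A1 (prepend c a) =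
  prepend (beta_word c) (fun n => beta A1 (prepend c a) (n + size c)).
Proof.
apply/funext => n; rewrite /prepend size_mkseq; case: ifPn => [n_lt|]; last first.
  by rewrite -leqNgt => /subnK ->.
rewrite nth_mkseq //; apply: eq_beta => i i_le.
by rewrite /prepend (leq_ltn_trans i_le n_lt).
Qed.

Section Realization.
Variables (s k0 k1 : nat).
Hypotheses (s_gt1 : (1 < s)%N) (k0_lt : (k0 < s)%N) (k1_lt : (k1 < s)%N)
  (k0_notin : ~ A1 k0) (k1_in : A1 k1).

Section RealizeBeta.
Variables (c : seq nat) (T : nat -> nat).
Hypotheses (c_digits : all (fun d => (d < s)%N) c)
  (T_le1 : forall n, (T n <= 1)%N)
  (T_prefix : forall n, (n < size c)%N -> T n = beta A1 (prepend c (fun=> 0%N)) n).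

Fixpoint realize_beta n :=
  if (n < size c)%N then nth 0%N c n else
  if n is n'.+1 then
    if T n'.+1 == T n' then realize_beta n' else ((realize_beta n').+1 %% s)%N
  else if T 0 == 1%N then k1 else k0.

Lemma realize_beta_nth n : (n < size c)%N -> realize_beta n = nth 0%N c n.
Proof. by case: n => [|n] /= ->. Qed.

Lemma realize_beta_lt n : (realize_beta n < s)%N.
Proof.
elim: n => [|n IH] /=; case: ifP => [/(all_nthP 0%N c_digits)//|_].
  by case: ifP.
by case: ifP => _ //; rewrite ltn_mod ltnW.
Qed.

Lemma realize_beta_prefix n : (n < size c)%N -> beta A1 realize_beta n = T n.
Proof.
move=> n_lt; rewrite T_prefix //; apply: eq_beta => i i_le.
have i_lt := leq_ltn_trans i_le n_lt.
by rewrite /prepend i_lt realize_beta_nth.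
Qed.

Lemma realize_betaE n : beta A1 realize_beta n = T n.
Proof.
have [/realize_beta_prefix //|c_le] := ltnP n (size c).
elim: n c_le => [|n IH] c_le /=; rewrite ltnNge c_le /=.
  by have := T_le1 0; case: (T 0) => [|[|]] //= _; case: asboolP.
rewrite -/(realize_beta n) -/(beta A1 realize_beta n).
have {}IH : beta A1 realize_beta n = T n.
  by have [/realize_beta_prefix|/IH] := ltnP n (size c).
rewrite IH; have [-> | T_flip] := eqVneq (T n.+1) (T n); first by rewrite eqxx.
rewrite (negbTE (succ_mod_neq s_gt1 (realize_beta_lt n))).
by have := T_le1 n; have := T_le1 n.+1; lia.
Qed.

End RealizeBeta.

Lemma beta_prepend_onto c t : all (fun d => (d < s)%N) c -> digits 2 t ->
  exists2 a, digits s a & beta A1 (prepend c a) = prepend (beta_word c) t.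
Proof.
move=> c_digits t_bits; set T := prepend (beta_word c) t.
have T_le1 n : (T n <= 1)%N.
  rewrite /T /prepend size_mkseq; case: ifP => [n_lt|_]; last exact: t_bits.
  by rewrite nth_mkseq // beta_le1.
have T_prefix n : (n < size c)%N -> T n = beta A1 (prepend c (fun=> 0%N)) n.
  by move=> n_lt; rewrite /T /prepend size_mkseq n_lt nth_mkseq.
pose g := realize_beta c T.
have gE : prepend c (fun n => g (n + size c)%N) = g.
  apply/funext => n; rewrite /prepend /g; case: ifPn => [/realize_beta_nth //|].
  by rewrite -leqNgt => /subnK ->.
exists (fun n => g (n + size c)%N); first by move=> n; exact: realize_beta_lt.
by rewrite gE; apply/funext => n; exact: realize_betaE.
Qed.

End Realization.
End Beta.

Section Interleave.
Variables (A1 : set nat) (s k0 p q : nat).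
Hypotheses (s_gt1 : (1 < s)%N) (k0_lt : (k0 < s)%N) (k0_notin : ~ A1 k0)
  (p_neq : p != k0) (q_neq : q != k0) (p_lt_q : (p < q)%N) (q_lt : (q < s)%N).

Definition interleave (t : nat -> bool) n :=
  if odd n then (if t n./2 then q else p) else k0.

Lemma interleave_digits t : digits s (interleave t).
Proof.
move=> n; rewrite /interleave; case: ifP => // _.
by case: ifP => // _; exact: ltn_trans q_lt.
Qed.

Lemma beta_interleave t : beta A1 (interleave t) = fun n => nat_of_bool (odd n).
Proof.
apply/funext; elim=> [|n IH] /=; first by rewrite /interleave /= asboolF.
have digit_change : interleave t n.+1 != interleave t n.
  by rewrite /interleave /=; case: (odd n) => /=; case: (t _) => //=; rewrite eq_sym.
by rewrite (negbTE digit_change) -/(beta A1 (interleave t) n) IH; case: (odd n).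
Qed.

Lemma sadic_interleave_lt (R : realType) t t' i :
  (forall j, (j < i)%N -> t j = t' j) -> t i = false -> t' i = true ->
  sadic s (interleave t) < sadic s (interleave t') :> R.
Proof.
move=> tt' ti t'i.
apply: (sadic_lt R s_gt1 (interleave_digits t) (interleave_digits t') (m := i.*2.+1)).
  move=> j j_lt; rewrite /interleave; case: ifP => // j_odd; rewrite tt' //.
  rewrite ltn_half_double ltn_neqAle -ltnS j_lt andbT.
  by apply: contraTneq j_odd => ->; rewrite odd_double.
rewrite /interleave /= odd_double /= uphalf_double ti t'i.
rewrite -addSn ltn_add2r; apply: leq_trans (leq_mul p_lt_q (leqnn s)).
by rewrite mulSn -add2n leq_add2r.
Qed.

Lemma sadic_interleave_inj (R : realType) :
  injective (fun t => sadic s (interleave t) : R).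
Proof.
move=> t t' /= e; apply/funext => i; elim/ltn_ind: i => i IH.
case ti: (t i); case t'i: (t' i) => //.
- have := sadic_interleave_lt R (fun j j_lt => esym (IH j j_lt)) t'i ti.
  by rewrite e ltxx.
- by have := sadic_interleave_lt R IH ti t'i; rewrite e ltxx.
Qed.

End Interleave.

Lemma exists_notin_sub (U A : set nat) : A `<=` U -> A <> U -> exists2 k, U k & ~ A k.
Proof.
move=> AU AneU; apply: contrapT => no_k; apply/AneU/seteqP; split => // k Uk.
by apply: contrapT => nAk; apply: no_k; exists k.
Qed.

Definition level_set (R : realType) (f : R -> R) (y : R) :=
  [set x | x \in `[0, 1]%classic /\ f x = y].

Section DigitMap.
Variables (R : realType) (s : nat) (A1 : set nat) (hs h2 f : R -> R) (k0 k1 : nat).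
Hypotheses (s_gt1 : (1 < s)%N) (rs : rep_map hs) (r2 : rep_map h2)
  (hf : forall a, digits s a -> f (hs (sadic s a)) = h2 (sadic 2 (beta A1 a)))
  (k0_lt : (k0 < s)%N) (k0_notin : ~ A1 k0) (k1_lt : (k1 < s)%N) (k1_in : A1 k1).

Lemma image_star_cyl c : all (fun d => (d < s)%N) c ->
  f @` star_cyl hs s c = star_cyl h2 2 (beta_word A1 c).
Proof.
move=> c_digits; apply/seteqP; split => [_ [_ [a [da ->]] <-]|_ [t [t_bits ->]]].
  rewrite hf; last exact: prepend_digits.
  rewrite beta_prepend; exists (fun n => beta A1 (prepend c a) (n + size c)).
  by split => // n; apply: beta_digits.
have [a da beta_a] := beta_prepend_onto s_gt1 k0_lt k1_lt k0_notin k1_in c_digits t_bits.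
exists (hs (sadic s (prepend c a))); first by exists a.
by rewrite hf ?beta_a //; apply: prepend_digits.
Qed.

Lemma image_itv01 : f @` `[0, 1]%classic = `[0, 1]%classic.
Proof. by rewrite -{1}(star_cyl_nil rs s_gt1) image_star_cyl // (star_cyl_nil r2). Qed.

Lemma level_set0_sub :
  level_set f (h2 0) `<=` (fun k => hs (sadic s (fun=> k))) @` `I_s.
Proof.
move=> _ [/(rep_map_sadic_surj rs s_gt1)[a da ->]]; rewrite hf // => beta_a.
have bits := beta_digits A1 a.
have beta0 : sadic 2 (beta A1 a) = 0 :> R.
  apply: (rep_map_inj r2) beta_a; first exact: sadic_itv.
  by rewrite lexx ler01.
have a_const := beta_eq0_const (sadic_eq0 (ltnSn 1) bits beta0).
exists (a 0%N); first exact: da.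
by congr (hs (sadic s _)); apply/funext => n; rewrite a_const.
Qed.

Lemma level_set0_finite :
  level_set f (h2 0) !=set0 /\ finite_set (level_set f (h2 0)).
Proof.
split; last exact: sub_finite_set level_set0_sub (finite_image _ (finite_II s)).
have beta_k0 : beta A1 (fun=> k0) = fun=> 0%N.
  by apply/funext; elim=> [|n IH] /=; rewrite ?asboolF ?eqxx.
exists (hs (sadic s (fun=> k0))); split; last by rewrite hf // beta_k0 sadic0.
exact/rep_map_in01/sadic_itv.
Qed.

Lemma level_set_alt_continuum : (2 < s)%N ->
  (level_set f (h2 (sadic 2 (fun n => nat_of_bool (odd n)))) #= [set: R])%card.
Proof.
move=> s_gt2.
have [p [q [p_neq q_neq p_lt_q q_lt]]] :
    exists p q, [/\ p != k0, q != k0, (p < q)%N & (q < s)%N].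
  exists (if k0 == 0%N then 1%N else 0%N), (if k0 == 2%N then 1%N else 2%N).
  by case: (k0) => [|[|[|k]]] /=; split.
have [phi phi_inj] := exists_inj_bits R.
have t_digits t := interleave_digits k0_lt p_lt_q q_lt t.
have t_itv t := sadic_itv R s_gt1 (t_digits t).
pose g x := hs (sadic s (interleave k0 p q (phi x))).
have g_inj : injective g.
  move=> x y /(rep_map_inj rs (t_itv _) (t_itv _)).
  by move/(sadic_interleave_inj s_gt1 k0_lt p_lt_q q_lt)/phi_inj.
have g_level : range g `<=` level_set f (h2 (sadic 2 (fun n => nat_of_bool (odd n)))).
  move=> _ [x _ <-]; split; first exact: rep_map_in01 (t_itv _).
  by rewrite /g hf // (beta_interleave k0_notin p_neq q_neq).
rewrite card_eq_le card_leT -(card_le_eql (inj_card_eq (in2W g_inj))).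
exact: subset_card_le.
Qed.

End DigitMap.

Theorem theorem2 (R : realType) (s : nat) (A0 A1 : set nat)
  (hs h2 : R -> R) (f : R -> R) :
  (2 < s)%N ->
  A0 `&` A1 = set0 ->
  A0 `|` A1 = [set n | (n < s)%N] ->
  A0 <> [set n | (n < s)%N] -> A1 <> [set n | (n < s)%N] ->
  rep_map hs -> rep_map h2 ->
  (forall a, digits s a -> f (hs (sadic s a)) = h2 (sadic 2 (beta A1 a))) ->
  (* (i) *)
  f @` `[0, 1]%classic = `[0, 1]%classic /\
  (* (ii) *)
  (forall c : seq nat, all (fun d => (d < s)%N) c ->
     exists b : seq nat, all (fun d => (d < 2)%N) b /\
       f @` star_cyl hs s c = star_cyl h2 2 b) /\
  (* (iii) *)
  (exists y, y \in `[0, 1]%classic /\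
     let L := [set x | x \in `[0, 1]%classic /\ f x = y] in
     L !=set0 /\ finite_set L) /\
  (exists y, y \in `[0, 1]%classic /\
     ([set x | x \in `[0, 1]%classic /\ f x = y] #= [set: R])%card).
Proof.
move=> s_gt2 _ A01 A0_neq A1_neq rs r2 hf; have s_gt1 := ltnW s_gt2.
have [k0 k0_lt k0_notin] : exists2 k0, (k0 < s)%N & ~ A1 k0.
  by apply: exists_notin_sub A1_neq; rewrite -A01 => k; right.
have [k1 k1_lt k1_in] : exists2 k1, (k1 < s)%N & A1 k1.
  have [k k_lt k_notin] : exists2 k, (k < s)%N & ~ A0 k.
    by apply: exists_notin_sub A0_neq; rewrite -A01 => k; left.
  have : (A0 `|` A1) k by rewrite A01.
  by case=> [/k_notin|k_in] //; exists k.
split; first exact: (image_itv01 s_gt1 rs r2 hf k0_lt k0_notin k1_lt k1_in).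
split.
  move=> c c_digits; exists (beta_word A1 c); split; first exact: beta_word_bits.
  exact: (image_star_cyl s_gt1 hf k0_lt k0_notin k1_lt k1_in).
split.
  exists (h2 0); split; last exact: (level_set0_finite s_gt1 rs r2 hf k0_lt k0_notin).
  by apply: rep_map_in01; rewrite // lexx ler01.
exists (h2 (sadic 2 (fun n => nat_of_bool (odd n)))).
split; last exact: (level_set_alt_continuum s_gt1 rs hf k0_lt k0_notin s_gt2).
by apply/rep_map_in01/sadic_itv => // n; case: odd.
Qed.
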